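(* Let $K$ be a field of characteristic $\neq 2$, $n\ge1$, and let $\mathcal C$ be an EACP over $K$ with natural basis $\{h_1,\dots,h_n,r\}$ and structural constants $a_{ij},b_i$. For $a\in\mathcal C$ let $L_a(x)=ax$, write $L_i=L_{h_i}$, and for $x=\sum_i x_ih_i+ur$ let ${\bf b}(x)=\sum_{i=1}^n b_ix_i$. Then for all $x\in\mathcal C$, all $m\ge1$ and all $i,i_1,\dots,i_m\in\{1,\dots,n\}$: $$L_{i_m}\circ L_{i_{m-1}}\circ\cdots\circ L_{i_1}(x)=\Big(\frac1{2^{m-1}}\prod_{j=1}^{m-1}b_{i_j}\Big)L_{i_m}(x),$$ $$L_r\circ L_i(x)=\frac12\sum_{j=1}^n a_{ij}L_j(x),\qquad L_i\circ L_r(x)=\frac{{\bf b}(x)}2\,L_i(r).$$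
   Context: An EACP over a field $K$ (characteristic $\neq 2$) is a $K$-algebra $\mathcal C$ with a basis $\{h_1,\dots,h_n,r\}$ (called a natural basis) whose multiplication is determined by bilinearity from $$h_ir=rh_i=\tfrac12\Big(\sum_{j=1}^n a_{ij}h_j+b_ir\Big),\qquad h_ih_j=0\ (i,j=1,\dots,n),\qquad rr=0,$$ for some constants $a_{ij},b_i\in K$. An empty product equals $1$. *)

From HB Require Import structures.
From mathcomp Require Import all_boot all_order all_algebra.
Set Implicit Arguments. Unset Strict Implicit. Unset Printing Implicit Defensive.
Import GRing.Theory.
Local Open Scope ring_scope.

Definition is_EACP (K : fieldType) (V : lmodType K) (n : nat)
  (mul : V -> V -> V) (h : 'I_n -> V) (r : V)
  (a : 'I_n -> 'I_n -> K) (b : 'I_n -> K) : Prop :=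
  [/\
      (forall (c : K) (x y z : V), mul (c *: x + y) z = c *: mul x z + mul y z),
      (forall (c : K) (x y z : V), mul z (c *: x + y) = c *: mul z x + mul z y),
      (forall x : V, exists (xc : 'I_n -> K) (u : K),
          x = \sum_(i < n) xc i *: h i + u *: r),
      (forall (xc : 'I_n -> K) (u : K),
          \sum_(i < n) xc i *: h i + u *: r = 0 -> (forall i, xc i = 0) /\ u = 0) &
      [/\ forall i, mul (h i) r = 2%:R^-1 *: (\sum_(j < n) a i j *: h j + b i *: r),
          forall i, mul r (h i) = 2%:R^-1 *: (\sum_(j < n) a i j *: h j + b i *: r),
          forall i j, mul (h i) (h j) = 0 &
          mul r r = 0]].

Fixpoint iterL (K : fieldType) (V : lmodType K) (n : nat)
  (mul : V -> V -> V) (h : 'I_n -> V) (idx : nat -> 'I_n) (m : nat) (x : V) : V :=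
  match m with
  | 0 => x
  | m'.+1 => mul (h (idx m)) (iterL mul h idx m' x)
  end.

(** Since [h_k h_j = 0], left multiplication [L_k] only sees the
    [r]-coordinate of its argument, so [L_k x = u L_k r].  The [r]-coordinate
    of [h_i x = u h_i r] is [u b_i / 2], hence [L_k (L_i x) = (b_i / 2) L_k x],
    which iterates to the product formula.  Dually [r r = 0], so [L_r] only
    sees the [h]-coordinates, and the identity [r h_j = h_j r] of the
    multiplication table yields the other two formulas. *)
From HB Require Import structures.
From mathcomp Require Import all_boot all_order all_algebra.
From mathcomp Require Import ring.
Import GRing.Theory.
Local Open Scope ring_scope.

Set Implicit Arguments.

Section EACPMultiplication.
Variables (K : fieldType) (V : lmodType K) (n : nat)
  (mul : V -> V -> V) (h : 'I_n -> V) (r : V)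
  (a : 'I_n -> 'I_n -> K) (b : 'I_n -> K).
Hypothesis eacp : is_EACP mul h r a b.

Lemma mul_addr z x y : mul z (x + y) = mul z x + mul z y.
Proof. by case: eacp => _ linr _ _ _; have := linr 1 x y z; rewrite !scale1r. Qed.

Lemma mul_0r z : mul z 0 = 0.
Proof. by apply: (addrI (mul z 0)); rewrite -mul_addr !addr0. Qed.

Lemma mul_scaler z c x : mul z (c *: x) = c *: mul z x.
Proof.
by case: eacp => _ linr _ _ _; have := linr c x 0 z; rewrite !addr0 mul_0r addr0.
Qed.

Lemma mul_sumr z (I : Type) (s : seq I) (P : pred I) (F : I -> V) :
  mul z (\sum_(i <- s | P i) F i) = \sum_(i <- s | P i) mul z (F i).
Proof. by apply: (big_morph (mul z)) => [x y|]; rewrite ?mul_addr ?mul_0r. Qed.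

Lemma eacp_coord x : exists (xc : 'I_n -> K) (u : K),
  x = \sum_(j < n) xc j *: h j + u *: r.
Proof. by case: eacp => _ _ span _ _; apply: span. Qed.

Lemma mul_h_coord k (xc : 'I_n -> K) u :
  mul (h k) (\sum_(j < n) xc j *: h j + u *: r) = u *: mul (h k) r.
Proof.
case: eacp => _ _ _ _ [_ _ mul_hh _].
rewrite mul_addr mul_sumr mul_scaler big1 ?add0r // => j _.
by rewrite mul_scaler mul_hh scaler0.
Qed.

Lemma mul_r_coord (xc : 'I_n -> K) u :
  mul r (\sum_(j < n) xc j *: h j + u *: r) = \sum_(j < n) xc j *: mul r (h j).
Proof.
case: eacp => _ _ _ _ [_ _ _ mul_rr].
rewrite mul_addr mul_sumr mul_scaler mul_rr scaler0 addr0.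
by apply: eq_bigr => j _; rewrite mul_scaler.
Qed.

Lemma mul_rh i : mul r (h i) = mul (h i) r.
Proof. by case: eacp => _ _ _ _ [-> -> _ _]. Qed.

Lemma mul_hr_coord i :
  mul (h i) r = \sum_(j < n) (2%:R^-1 * a i j) *: h j + (2%:R^-1 * b i) *: r.
Proof.
case: eacp => _ _ _ _ [-> _ _ _].
rewrite scalerDr scaler_sumr scalerA; congr (_ + _).
by apply: eq_bigr => j _; rewrite scalerA.
Qed.

Lemma mul_hh k i x : mul (h k) (mul (h i) x) = (b i / 2%:R) *: mul (h k) x.
Proof.
have [xc [u ->]] := eacp_coord x.
rewrite [mul (h i) _]mul_h_coord [in RHS]mul_h_coord mul_scaler.
by rewrite mul_hr_coord mul_h_coord !scalerA mulrC [_ / _]mulrC.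
Qed.

Lemma iterL_h (idx : nat -> 'I_n) m x :
  iterL mul h idx m.+1 x =
  ((2%:R^-1) ^+ m * \prod_(1 <= j < m.+1) b (idx j)) *: mul (h (idx m.+1)) x.
Proof.
elim: m => [|m IH]; first by rewrite /= big_geq // expr0 mul1r scale1r.
rewrite [LHS]/= -/(iterL mul h idx m.+1 x) IH mul_scaler mul_hh scalerA.
by rewrite [in RHS]big_nat_recr //= exprS; congr (_ *: _); ring.
Qed.

Lemma mul_r_h x i :
  mul r (mul (h i) x) = 2%:R^-1 *: \sum_(j < n) a i j *: mul (h j) x.
Proof.
have [xc [u ->]] := eacp_coord x.
rewrite [mul (h i) _]mul_h_coord mul_scaler mul_hr_coord mul_r_coord.
rewrite !scaler_sumr; apply: eq_bigr => j _.
by rewrite mul_h_coord mul_rh !scalerA; congr (_ *: _); ring.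
Qed.

Lemma mul_h_r i (xc : 'I_n -> K) u :
  mul (h i) (mul r (\sum_(j < n) xc j *: h j + u *: r)) =
  ((\sum_(j < n) b j * xc j) / 2%:R) *: mul (h i) r.
Proof.
rewrite mul_r_coord mul_sumr mulr_suml scaler_suml; apply: eq_bigr => j _.
by rewrite mul_scaler mul_rh mul_hh scalerA mulrA [b j * _]mulrC.
Qed.

End EACPMultiplication.

Theorem mainTheorem11 (K : fieldType) (V : lmodType K) (n : nat)
  (mul : V -> V -> V) (h : 'I_n -> V) (r : V)
  (a : 'I_n -> 'I_n -> K) (b : 'I_n -> K) :
  (2%:R : K) != 0 -> (1 <= n)%N ->
  is_EACP mul h r a b ->
  [/\ (* L_{i_m} o ... o L_{i_1}(x) = (2^{-(m-1)} prod_{j=1}^{m-1} b_{i_j}) L_{i_m}(x) *)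
      forall (x : V) (m : nat) (idx : nat -> 'I_n), (1 <= m)%N ->
        iterL mul h idx m x =
        ((2%:R^-1) ^+ m.-1 * \prod_(1 <= j < m) b (idx j)) *: mul (h (idx m)) x,
      (* L_r o L_i (x) = 1/2 sum_j a_ij L_j(x) *)
      forall (x : V) (i : 'I_n),
        mul r (mul (h i) x) = 2%:R^-1 *: \sum_(j < n) a i j *: mul (h j) x &
      (* L_i o L_r (x) = b(x)/2 L_i(r), where x = sum_j x_j h_j + u r *)
      forall (x : V) (xc : 'I_n -> K) (u : K) (i : 'I_n),
        x = \sum_(j < n) xc j *: h j + u *: r ->
        mul (h i) (mul r x) = ((\sum_(j < n) b j * xc j) / 2%:R) *: mul (h i) r].
Proof.
move=> _ _ eacp; split.
- by move=> x [|m] idx // _; rewrite (iterL_h eacp).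
- exact: mul_r_h eacp.
- by move=> x xc u i ->; rewrite (mul_h_r eacp).
Qed.
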